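(* Let $N$ be an odd positive integer and let $|\psi\rangle$ be any pure state of $N$ qubits, with density matrix $\rho=|\psi\rangle\langle\psi|$. Then its length of correlations satisfies $$\mathcal{C}(\psi)=\sum_{j_1,\dots,j_N=1}^{3} T_{j_1\dots j_N}^2\;\le\; 2^{N-1}.$$
   Context: Let $\sigma_0=\mathbb{I}$ and let $\sigma_1,\sigma_2,\sigma_3$ be the Pauli matrices. Any $N$-qubit density matrix can be written as $\rho=2^{-N}\sum_{\mu_1,\dots,\mu_N=0}^{3}T_{\mu_1\dots\mu_N}\,\sigma_{\mu_1}\otimes\dots\otimes\sigma_{\mu_N}$ with real coefficients $T_{\mu_1\dots\mu_N}=\mathrm{Tr}(\rho\,\sigma_{\mu_1}\otimes\dots\otimes\sigma_{\mu_N})$. The length of correlations of $\rho$ is $\mathcal{C}(\rho)=\sum_{j_1,\dots,j_N=1}^{3}T_{j_1\dots j_N}^2$ (all indices ranging over $1,2,3$ only, i.e. only full $N$-partite correlations). *)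

From HB Require Import structures.
From mathcomp Require Import all_boot all_order all_algebra.
Unset Printing Implicit Defensive.
Import Order.TTheory GRing.Theory Num.Theory.
Local Open Scope ring_scope.

(* Complex scalars: any numeric closed field C (e.g. complex numbers over a
   real closed field / realType).  *)

(* Pauli matrices sigma_0 = I, sigma_1 = X, sigma_2 = Y, sigma_3 = Z,
   as 2x2 matrices with rows/columns indexed by 'I_2 (basis |0>, |1>). *)
Definition pauli (C : numClosedFieldType) (mu : 'I_4) : 'M[C]_2 :=
  \matrix_(a < 2, b < 2)
    match val mu with
    | 0%N => if a == b then 1 else 0
    | 1%N => if a != b then 1 else 0
    | 2%N => if a == b then 0 else if val a == 0%N then - 'i else 'i
    | _   => if a == b then (if val a == 0%N then 1 else -1) else 0
    end.

(* Computational basis of N qubits: bit strings x : 'I_N -> 'I_2.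
   A state vector psi assigns an amplitude to each basis string. *)
Notation basis N := {ffun 'I_N -> 'I_2}.

(* Entry (x,y) of sigma_{mu_1} (x) ... (x) sigma_{mu_N} (Kronecker product). *)
Definition pauli_string (C : numClosedFieldType) (N : nat)
  (mu : {ffun 'I_N -> 'I_4}) (x y : basis N) : C :=
  \prod_(k < N) pauli C (mu k) (x k) (y k).

Definition rho_of {C : numClosedFieldType} {N : nat} (psi : basis N -> C)
  (x y : basis N) : C := psi x * (psi y)^*.

(* T_mu = Tr(rho sigma_{mu_1} (x) ... (x) sigma_{mu_N}). *)
Definition corr_T {C : numClosedFieldType} {N : nat} (psi : basis N -> C)
  (mu : {ffun 'I_N -> 'I_4}) : C :=
  \sum_(x : basis N) \sum_(y : basis N) rho_of psi x y * pauli_string C N mu y x.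

Definition length_corr {C : numClosedFieldType} {N : nat} (psi : basis N -> C) : C :=
  \sum_(mu : {ffun 'I_N -> 'I_4} | [forall k, mu k != ord0]) corr_T psi mu ^+ 2.

Definition normalized {C : numClosedFieldType} {N : nat} (psi : basis N -> C) : Prop :=
  \sum_(x : basis N) `|psi x| ^+ 2 = 1.

From HB Require Import structures.
From mathcomp Require Import all_boot all_order all_algebra.
From mathcomp Require Import ring.
Import Order.TTheory GRing.Theory Num.Theory.
Local Open Scope ring_scope.

(* Expanding T_mu^2 and summing over mu with a product weight f turns the
   single-qubit sums into Pauli completeness relations.  With f = 1 this gives
   sum_mu T_mu^2 = 2^N; with f = +1 on the identity and -1 on sigma_1..3 it gives
   2^N |<psi| eps^(x)N |psi*>|^2, where eps is the 2x2 antisymmetric matrix.  For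
   odd N the form eps^(x)N is antisymmetric, so that weighted sum vanishes.  On the
   full correlations (all mu_k <> 0) the weight is (-1)^N = -1, hence
   2 C(psi) <= sum_mu (1 - weight) T_mu^2 = 2^N. *)

Lemma prod_eq_ffun (R : comPzSemiRingType) (I : finType) (T : eqType)
    (u v : {ffun I -> T}) :
  \prod_(k : I) ((u k == v k)%:R : R) = (u == v)%:R.
Proof.
have [->|neq_uv] := eqVneq u v; first by rewrite big1 // => k _; rewrite eqxx.
have [k neq_k] : exists k, u k != v k.
  apply/existsP; apply: contraR neq_uv; rewrite negb_exists => /forallP eq_uv.
  by apply/eqP/ffunP => k; apply/eqP; have := eq_uv k; rewrite negbK.
by rewrite (bigD1 k) //= (negbTE neq_k) mul0r.
Qed.

Lemma sum_mul_eq_nat (R : pzSemiRingType) (I : finType) (F : I -> R) (a : I) :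
  \sum_(x : I) F x * (a == x)%:R = F a.
Proof.
rewrite (bigD1 a) //= eqxx mulr1 big1 ?addr0 // => x neq_xa.
by rewrite eq_sym (negbTE neq_xa) mulr0.
Qed.

Lemma sum_antisym_form_eq0 (R : numDomainType) (I : finType) (E : I -> I -> R)
    (a : I -> R) :
  (forall u v, E v u = - E u v) -> \sum_(u : I) \sum_(v : I) a u * a v * E u v = 0.
Proof.
move=> E_anti; set Q := (X in X = 0).
have : Q = - Q.
  rewrite {1}/Q exchange_big /Q -sumrN; apply: eq_bigr => u _; rewrite -sumrN.
  by apply: eq_bigr => v _; rewrite E_anti; ring.
by move/eqP; rewrite -subr_eq0 opprK -mulr2n mulrn_eq0 => /eqP.
Qed.

Lemma sum_neg_sign_le_half (R : numDomainType) (I : finType) (P : pred I)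
    (s a : I -> R) :
  (forall i, 0 <= a i) -> (forall i, s i <= 1) -> (forall i, P i -> s i = -1) ->
  \sum_i s i * a i = 0 -> 2 * \sum_(i | P i) a i <= \sum_i a i.
Proof.
move=> a_ge0 s_le1 s_P sum_sa0.
have -> : \sum_i a i = \sum_i (1 - s i) * a i.
  by under [RHS]eq_bigr do rewrite mulrBl mul1r; rewrite sumrB sum_sa0 subr0.
rewrite [X in _ <= X](bigID P) /= big_distrr /= -[X in X <= _]addr0.
apply: lerD; last by apply: sumr_ge0 => i _; rewrite mulr_ge0 ?subr_ge0.
by apply: ler_sum => i /s_P ->; rewrite opprK.
Qed.

Section PauliCorrelations.
Variable C : numClosedFieldType.

Lemma conj_pauli (m : 'I_4) (a b : 'I_2) : (pauli C m a b)^* = pauli C m b a.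
Proof.
rewrite !mxE.
case: m => [[|[|[|[|m]]]] ?] //=; case: a => [[|[|a]] ?] //=;
case: b => [[|[|b]] ?] //=;
rewrite ?conjC1 ?conjC0 ?rmorphN /= ?conjC1 ?conjCi ?opprK //.
Qed.

Lemma pauli_completeness (a b c d : 'I_2) :
  \sum_(m < 4) pauli C m a b * pauli C m c d = 2 * (a == d)%:R * (b == c)%:R.
Proof.
rewrite !big_ord_recl big_ord0 !mxE /=.
case: a => [[|[|a]] ?] //=; case: b => [[|[|b]] ?] //=;
case: c => [[|[|c]] ?] //=; case: d => [[|[|d]] ?] //=;
rewrite /bump /= ?mulrNN ?mulNr ?mulrN -?expr2 ?sqrCi; ring.
Qed.

(* [levi_civita] is the matrix i sigma_2, the antisymmetric form on C^2. *)
Definition levi_civita (a c : 'I_2) : C :=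
  if a == c then 0 else if val a == 0%N then 1 else -1.

Lemma levi_civita_antisym (a c : 'I_2) : levi_civita c a = - levi_civita a c.
Proof.
rewrite /levi_civita.
by case: a => [[|[|a]] ?] //=; case: c => [[|[|c]] ?] //=; rewrite ?oppr0 ?opprK.
Qed.

Definition pauli_sign (m : 'I_4) : C := if m == ord0 then 1 else -1.

Lemma signed_pauli_completeness (a b c d : 'I_2) :
  \sum_(m < 4) pauli_sign m * (pauli C m a b * pauli C m c d) =
  2 * levi_civita a c * levi_civita b d.
Proof.
rewrite /pauli_sign /levi_civita !big_ord_recl big_ord0 !mxE /=.
case: a => [[|[|a]] ?] //=; case: b => [[|[|b]] ?] //=;
case: c => [[|[|c]] ?] //=; case: d => [[|[|d]] ?] //=;
rewrite /bump /= ?mulrNN ?mulNr ?mulrN -?expr2 ?sqrCi; ring.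
Qed.

Variable N : nat.

Definition pauli_weight (mu : {ffun 'I_N -> 'I_4}) : C :=
  \prod_(k < N) pauli_sign (mu k).

Lemma pauli_weight_le1 mu : pauli_weight mu <= 1.
Proof.
suff [->|->] : pauli_weight mu = 1 \/ pauli_weight mu = -1.
- exact: lexx.
- exact: le_trans (lerN10 _) ler01.
apply: (big_ind (fun x : C => x = 1 \/ x = -1)); first by left.
  by move=> _ _ [->|->] [->|->]; rewrite ?mulr1 ?mulrN1 ?opprK; auto.
by move=> k _; rewrite /pauli_sign; case: ifP; auto.
Qed.

Lemma pauli_weight_full (mu : {ffun 'I_N -> 'I_4}) :
  odd N -> [forall k, mu k != ord0] -> pauli_weight mu = -1.
Proof.
move=> oddN /forallP full_mu; rewrite /pauli_weight (eq_bigr (fun=> -1)).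
  by rewrite prodr_const card_ord -signr_odd oddN.
by move=> k _; rewrite /pauli_sign (negbTE (full_mu k)).
Qed.

Definition levi_civita_tensor (u v : basis N) : C :=
  \prod_(k < N) levi_civita (u k) (v k).

Lemma levi_civita_tensor_antisym u v :
  odd N -> levi_civita_tensor v u = - levi_civita_tensor u v.
Proof.
move=> oddN; rewrite /levi_civita_tensor.
rewrite (eq_bigr (fun k => - levi_civita (u k) (v k))) => [|k _]; last first.
  exact: levi_civita_antisym.
by rewrite prodrN card_ord -signr_odd oddN mulN1r.
Qed.

Variable psi : basis N -> C.

Lemma corr_T_conj mu : (corr_T psi mu)^* = corr_T psi mu.
Proof.
rewrite /corr_T rmorph_sum exchange_big; apply: eq_bigr => y _.
rewrite rmorph_sum; apply: eq_bigr => x _.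
rewrite /rho_of /pauli_string !rmorphM /= conjCK rmorph_prod.
rewrite (eq_bigr (fun k => pauli C (mu k) (y k) (x k))) => [|k _]; last first.
  exact: conj_pauli.
ring.
Qed.

Lemma corr_T_sqr_ge0 mu : 0 <= corr_T psi mu ^+ 2.
Proof. by rewrite expr2 -{2}corr_T_conj -normCK exprn_ge0. Qed.

Definition rho_rho (x y x' y' : basis N) : C := rho_of psi x y * rho_of psi x' y'.

Lemma corr_T_sqrE mu : corr_T psi mu ^+ 2 =
  \sum_x \sum_y \sum_x' \sum_y' rho_rho x y x' y' *
    \prod_(k < N) (pauli C (mu k) (y k) (x k) * pauli C (mu k) (y' k) (x' k)).
Proof.
rewrite expr2 /corr_T big_distrl; apply: eq_bigr => x _; rewrite big_distrl.
apply: eq_bigr => y _; rewrite big_distrr; apply: eq_bigr => x' _.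
rewrite big_distrr; apply: eq_bigr => y' _ /=.
by rewrite /rho_rho /pauli_string big_split /=; ring.
Qed.

Lemma sum_prod_weight_corr_T_sqr (f : 'I_4 -> C) :
  \sum_(mu : {ffun 'I_N -> 'I_4}) (\prod_(k < N) f (mu k)) * corr_T psi mu ^+ 2 =
  \sum_x \sum_y \sum_x' \sum_y' rho_rho x y x' y' *
    \prod_(k < N) \sum_(m < 4) f m * (pauli C m (y k) (x k) * pauli C m (y' k) (x' k)).
Proof.
under eq_bigr => mu _.
  rewrite corr_T_sqrE big_distrr; under eq_bigr => x _.
    rewrite big_distrr; under eq_bigr => y _.
      rewrite big_distrr; under eq_bigr => x' _.
        rewrite big_distrr; under eq_bigr => y' _.
          rewrite /= mulrCA -big_split /=; over.
        over.
      over.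
    over.
  over.
rewrite exchange_big; apply: eq_bigr => x _; rewrite exchange_big.
apply: eq_bigr => y _; rewrite exchange_big; apply: eq_bigr => x' _.
rewrite exchange_big; apply: eq_bigr => y' _.
by rewrite -big_distrr bigA_distr_bigA.
Qed.

Lemma sum_corr_T_sqr :
  \sum_(mu : {ffun 'I_N -> 'I_4}) corr_T psi mu ^+ 2 =
  2 ^+ N * (\sum_x psi x * (psi x)^*) ^+ 2.
Proof.
transitivity (\sum_(mu : {ffun 'I_N -> 'I_4})
    (\prod_(k < N) (fun=> 1 : C) (mu k)) * corr_T psi mu ^+ 2).
  by apply: eq_bigr => mu _; rewrite big1 ?mul1r.
rewrite (sum_prod_weight_corr_T_sqr (fun=> 1)).
transitivity (\sum_x \sum_y 2 ^+ N * rho_rho x y y x).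
  apply: eq_bigr => x _; apply: eq_bigr => y _.
  under eq_bigr => x' _.
    under eq_bigr => y' _.
      under eq_bigr do rewrite (eq_bigr _ (fun m _ => mul1r _)) pauli_completeness.
      rewrite !big_split /= prodr_const card_ord !prod_eq_ffun !mulrA; over.
    rewrite sum_mul_eq_nat; over.
  by rewrite sum_mul_eq_nat; ring.
rewrite expr2 big_distrl big_distrr /=; apply: eq_bigr => x _.
rewrite !big_distrr /=; apply: eq_bigr => y _.
by rewrite /rho_rho /rho_of; ring.
Qed.

Lemma sum_pauli_weight_corr_T_sqr_odd : odd N ->
  \sum_(mu : {ffun 'I_N -> 'I_4}) pauli_weight mu * corr_T psi mu ^+ 2 = 0.
Proof.
move=> oddN; rewrite sum_prod_weight_corr_T_sqr.
transitivity (\sum_x \sum_x' (psi x * psi x' * levi_civita_tensor x x') *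
  (2 ^+ N * \sum_y \sum_y' (psi y)^* * (psi y')^* * levi_civita_tensor y y')).
  apply: eq_bigr => x _; rewrite exchange_big; apply: eq_bigr => x' _.
  rewrite !big_distrr; apply: eq_bigr => y _; rewrite !big_distrr.
  apply: eq_bigr => y' _ /=.
  under eq_bigr do rewrite signed_pauli_completeness.
  rewrite !big_split /= prodr_const card_ord.
  by rewrite /rho_rho /rho_of /levi_civita_tensor; ring.
under eq_bigr do rewrite -big_distrl.
rewrite -big_distrl /= sum_antisym_form_eq0 ?mul0r //.
by move=> u v; rewrite levi_civita_tensor_antisym.
Qed.

End PauliCorrelations.

Theorem theorem3 (C : numClosedFieldType) (N : nat) (psi : {ffun 'I_N -> 'I_2} -> C) :
  odd N -> normalized psi -> length_corr psi <= (2 ^ N.-1)%:R.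
Proof.
move=> oddN norm_psi.
have norm1 : \sum_x psi x * (psi x)^* = 1.
  by rewrite -norm_psi; apply: eq_bigr => x _; rewrite normCK.
have twice_le : 2 * length_corr psi <= 2 ^+ N.
  have -> : 2 ^+ N = \sum_(mu : {ffun 'I_N -> 'I_4}) corr_T psi mu ^+ 2.
    by rewrite sum_corr_T_sqr norm1 expr1n mulr1.
  apply: (@sum_neg_sign_le_half _ _ _ (pauli_weight C N)).
  - exact: corr_T_sqr_ge0.
  - exact: pauli_weight_le1.
  - by move=> mu; apply: pauli_weight_full.
  - exact: sum_pauli_weight_corr_T_sqr_odd.
have N_gt0 : (0 < N)%N by rewrite lt0n; apply: contraTneq oddN => ->.
by rewrite natrX -(ler_pM2l (ltr0n C 2)) -exprS prednK.
Qed.
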